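(* Let $\Lambda$ be a finite-dimensional local algebra over an algebraically closed field $k$, and let $M$ be an indecomposable finitely generated $\Lambda$-module such that $\mathrm{End}_\Lambda(M)$ is quasi-Frobenius. Then $M/J(M)\simeq\mathrm{Soc}(M)\simeq k$, where $k$ denotes the unique simple $\Lambda$-module.
   Context: Quasi-Frobenius: the left regular module is injective. $J(M)$ is the radical and $\mathrm{Soc}(M)$ the socle of $M$. *)

From HB Require Import structures.
From mathcomp Require Import all_boot all_order all_algebra all_field.
From mathcomp Require Import boolp.

Set Implicit Arguments.
Unset Strict Implicit.
Unset Printing Implicit Defensive.
Import GRing.Theory.
Local Open Scope ring_scope.

(* Conventions:
   - Lambda is a finite-dimensional K-algebra  A : falgType K.
   - A finitely generated (= finite-dimensional) left A-module M of K-dimension n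
     is K^n = 'rV[K]_n with a . v := v *m rho a, where rho : A -> 'M[K]_n is
     K-linear, unital and anti-multiplicative (rho (a * b) = rho b *m rho a).
   - K-subspaces of M are row spaces of matrices (mxalgebra, %MS). *)

Section Modules.
Variables (K : fieldType) (A : falgType K).

Definition left_ideal (I : {vspace A}) : Prop :=
  forall a x : A, x \in I -> a * x \in I.

Definition maximal_left_ideal (I : {vspace A}) : Prop :=
  [/\ left_ideal I, (1 : A) \notin I &
      forall I' : {vspace A}, left_ideal I' -> (I <= I')%VS ->
        I' = I \/ (1 : A) \in I'].

Definition local_algebra : Prop :=
  exists I : {vspace A}, maximal_left_ideal I /\
    forall I' : {vspace A}, maximal_left_ideal I' -> I' = I.

Definition is_module (n : nat) (rho : A -> 'M[K]_n) : Prop :=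
  [/\ forall (c : K) (a b : A), rho (c *: a + b) = c *: rho a + rho b,
      rho 1 = 1%:M &
      forall a b : A, rho (a * b) = rho b *m rho a].

Variables (n : nat) (rho : A -> 'M[K]_n).
Local Notation O := (0 : 'M[K]_n).
Local Notation I := (1%:M : 'M[K]_n).

Definition submodule (U : 'M[K]_n) : Prop :=
  forall a : A, (U *m rho a <= U)%MS.

Definition indecomposable : Prop :=
  (0 < n)%N /\
  forall U V : 'M[K]_n, submodule U -> submodule V ->
    (U + V == I)%MS -> (U :&: V == O)%MS -> (U == O)%MS \/ (V == O)%MS.

Definition simple_module : Prop :=
  (0 < n)%N /\
  forall U : 'M[K]_n, submodule U -> (U == O)%MS \/ (U == I)%MS.

Definition maximal_submodule (U : 'M[K]_n) : Prop :=
  [/\ submodule U, ~~ (I <= U)%MS &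
      forall V : 'M[K]_n, submodule V -> (U <= V)%MS ->
        (V == U)%MS \/ (I <= V)%MS].

Definition simple_submodule (U : 'M[K]_n) : Prop :=
  [/\ submodule U, ~~ (U == O)%MS &
      forall V : 'M[K]_n, submodule V -> (V <= U)%MS ->
        (V == O)%MS \/ (V == U)%MS].

Definition is_radical (J : 'M[K]_n) : Prop :=
  forall v : 'rV[K]_n,
    (v <= J)%MS <-> (forall U, maximal_submodule U -> (v <= U)%MS).

Definition is_socle (S : 'M[K]_n) : Prop :=
  (forall U, simple_submodule U -> (U <= S)%MS) /\
  exists Us : seq 'M[K]_n,
    (forall U, U \in Us -> simple_submodule U) /\
    (S == \sum_(U <- Us) U)%MS.

Definition quotient_iso (J : 'M[K]_n) (m : nat) (sigma : A -> 'M[K]_m) : Prop :=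
  exists f : 'M[K]_(n, m),
    [/\ forall a : A, rho a *m f = f *m sigma a,
        row_full f & (kermx f == J)%MS].

(* the submodule U is isomorphic to (m, sigma): a module map defined on U,
   mapping U bijectively onto K^m *)
Definition submodule_iso (U : 'M[K]_n) (m : nat) (sigma : A -> 'M[K]_m) : Prop :=
  exists f : 'M[K]_(n, m),
    [/\ forall a : A, U *m (rho a *m f - f *m sigma a) = 0,
        \rank U = m & (U *m f == (1%:M : 'M[K]_m))%MS].

(* f : 'M_n represents the K-linear map v |-> v *m f; it is A-linear iff it
   commutes with every rho a. *)
Definition endo_pred : pred 'M[K]_n :=
  fun f => `[< forall a : A, rho a *m f = f *m rho a >].

Lemma endo_subring_closed : subring_closed endo_pred.
Proof.
split.
- by apply/asboolP => a; rewrite mulmx1 mul1mx.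
- move=> f g /asboolP Hf /asboolP Hg; apply/asboolP => a.
  by rewrite mulmxBr mulmxBl Hf Hg.
- move=> f g /asboolP Hf /asboolP Hg; apply/asboolP => a.
  by rewrite mulmxA Hf -mulmxA Hg mulmxA.
Qed.

Definition EndMx := {f : 'M[K]_n | endo_pred f}.
HB.instance Definition _ := [isSub of EndMx for @proj1_sig _ endo_pred].
HB.instance Definition _ := [Choice of EndMx by <:].
HB.instance Definition _ :=
  GRing.SubChoice_isSubPzRing.Build 'M[K]_n endo_pred EndMx endo_subring_closed.

End Modules.

(* Composition: (v |-> v f) o (v |-> v g) = (v |-> v *m (g *m f)), so
   End_A(M) (with composition as product) is the converse ring of EndMx. *)
Definition EndRing (K : fieldType) (A : falgType K) (n : nat)
  (rho : A -> 'M[K]_n) : pzRingType := (EndMx rho)^c.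

Definition injective_module (R : pzRingType) (Q : lmodType R) : Prop :=
  forall (U V : lmodType R) (i : {linear U -> V}), injective i ->
  forall f : {linear U -> Q},
    exists g : {linear V -> Q}, forall u : U, g (i u) = f u.

Definition quasi_Frobenius (R : pzRingType) : Prop :=
  injective_module (R^o : lmodType R).

(* Over an algebraically closed field every element a of the local algebra acts
   on a top functional f : M -> k and on a socle vector s of M through the same
   residue scalar, so f s is an endomorphism of M, and it suffices to show that
   top functionals and socle vectors each form a line.  Let E = End(M); by
   Fitting's lemma every element of E is a unit or nilpotent.  If f1, f2 were
   independent top functionals, the relations of (f1 s, f2 s) in E would be those
   of (f1 s, 0), and self-injectivity of E (Baer) would give c in E fixing f1 and
   killing f2, which is impossible for a unit and for a nilpotent.  The non-units
   of E form a nil space, so an Engel argument yields a socle vector s0 killed by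
   all of them; for any socle vector s the relations of f s are then relations of
   f s0, and self-injectivity again makes s0 a multiple of s. *)
From HB Require Import structures.
From mathcomp Require Import all_boot all_order all_algebra all_field.
From mathcomp Require Import boolp zify.
Set Implicit Arguments.
Unset Strict Implicit.
Unset Printing Implicit Defensive.
Import GRing.Theory.
Local Open Scope ring_scope.

Section InjectiveRegularModule.
Variables (R : pzRingType) (x1 x2 z1 z2 : R).
Hypothesis relations_transfer :
  forall r1 r2 : R, r1 * x1 + r2 * x2 = 0 -> r1 * z1 + r2 * z2 = 0.

Definition in_ideal2 (x : R) : Prop := exists r : R * R, x = r.1 * x1 + r.2 * x2.

Definition ideal2 : pred R^o := fun x => `[< in_ideal2 x >].

Lemma ideal2_submod_closed : subsemimod_closed ideal2.
Proof.
split; first split.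
- by apply/asboolP; exists (0, 0); rewrite /= !mul0r addr0.
- move=> u v /asboolP [[a1 a2] ->] /asboolP [[b1 b2] ->]; apply/asboolP.
  by exists (a1 + b1, a2 + b2); rewrite /= !mulrDl addrACA.
- move=> a u /asboolP [[a1 a2] ->]; apply/asboolP.
  by exists (a * a1, a * a2); rewrite /= /GRing.scale /= mulrDr !mulrA.
Qed.

Definition ideal2_sub := {x : R^o | ideal2 x}.
HB.instance Definition _ := [isSub of ideal2_sub for @proj1_sig _ ideal2].
HB.instance Definition _ := [Choice of ideal2_sub by <:].
HB.instance Definition _ :=
  GRing.isSubmodClosed.Build R R^o ideal2 ideal2_submod_closed.
HB.instance Definition _ := [SubChoice_isSubLmodule of ideal2_sub by <:].

Definition ideal2_coef (x : R) : R * R :=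
  if pselect (in_ideal2 x) is left H then projT1 (cid H) else (0, 0).

Definition ideal2_transfer (u : ideal2_sub) : R^o :=
  (ideal2_coef (val u)).1 * z1 + (ideal2_coef (val u)).2 * z2.

Lemma ideal2_transferE u r : val u = r.1 * x1 + r.2 * x2 ->
  ideal2_transfer u = r.1 * z1 + r.2 * z2.
Proof.
move=> uE; rewrite /ideal2_transfer /ideal2_coef.
case: pselect => [u_in|[]]; last by exists r.
case: (cid u_in) => [[c1 c2] /= cE]; apply/eqP; rewrite -subr_eq0.
have rel : (c1 - r.1) * x1 + (c2 - r.2) * x2 = 0.
  by rewrite !mulrBl addrACA -opprD -cE -uE subrr.
by rewrite -(relations_transfer rel) !mulrBl addrACA opprD.
Qed.

Lemma ideal2_transfer_linear : linear ideal2_transfer.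
Proof.
move=> a u v; have /asboolP [[a1 a2] uE] := valP u.
have /asboolP [[b1 b2] vE] := valP v.
rewrite (ideal2_transferE uE) (ideal2_transferE vE).
rewrite (@ideal2_transferE _ (a * a1 + b1, a * a2 + b2)); last first.
  by rewrite raddfD /= uE vE /GRing.scale /= mulrDr !mulrA !mulrDl addrACA.
by rewrite /= /GRing.scale /= !mulrDl mulrDr !mulrA addrACA.
Qed.

HB.instance Definition _ :=
  GRing.isLinear.Build R ideal2_sub R^o *:%R ideal2_transfer ideal2_transfer_linear.

(* The transfer map extends from R x1 + R x2 to R, and every linear endomorphism
   of R^o is a right multiplication. *)
Lemma injective_regular_extend2 : injective_module (R^o : lmodType R) ->
  exists c : R, z1 = x1 * c /\ z2 = x2 * c.
Proof.
move=> injR.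
have val_linear : linear (val : ideal2_sub -> R^o) by [].
pose incl : {linear ideal2_sub -> R^o} :=
  HB.pack (val : ideal2_sub -> R^o) (GRing.isLinear.Build R _ _ *:%R _ val_linear).
have [g gE] := injR _ _ incl val_inj ideal2_transfer.
have g_rmul (x : R) : g x = x * g 1.
  by rewrite -[in LHS](mulr1 x) -[x * 1]/(x *: (1 : R^o)) linearZ.
have x1_in : ideal2 x1 by apply/asboolP; exists (1, 0); rewrite /= mul1r mul0r addr0.
have x2_in : ideal2 x2 by apply/asboolP; exists (0, 1); rewrite /= mul1r mul0r add0r.
have g_transfer x (x_in : ideal2 x) : g x = ideal2_transfer (exist _ x x_in).
  exact: (gE (exist _ x x_in)).
exists (g 1); split; rewrite -g_rmul.
- by rewrite (g_transfer _ x1_in) (@ideal2_transferE _ (1, 0)) /= mul1r mul0r addr0.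
- by rewrite (g_transfer _ x2_in) (@ideal2_transferE _ (0, 1)) /= mul1r mul0r add0r.
Qed.

End InjectiveRegularModule.

Section MatrixFacts.
Variable K : fieldType.

Lemma mxrank_exprS_stable p (c : 'M[K]_p) :
  exists2 k, (k <= p)%N & \rank (c ^+ k.+1) = \rank (c ^+ k).
Proof.
have rank_exprS k : (\rank (c ^+ k.+1) <= \rank (c ^+ k))%N.
  by rewrite exprSr -mulmxE mxrankM_maxl.
apply: contrapT => unstable.
have rank_drop k : (k <= p.+1)%N -> (\rank (c ^+ k) + k <= p)%N.
  elim: k => [|k IHk] lt_k; first by rewrite expr0 mxrank1 addn0.
  have : \rank (c ^+ k.+1) != \rank (c ^+ k).
    by apply/eqP => E; apply: unstable; exists k.
  by have := rank_exprS k; have := IHk (ltnW lt_k); lia.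
by have := rank_drop p.+1 (leqnn _); lia.
Qed.

Lemma eqmx_expr_stable p (c : 'M[K]_p) :
  exists2 k, (k <= p)%N & forall j, (k <= j)%N -> (c ^+ j == c ^+ k)%MS.
Proof.
have [k le_kp rank_stable] := mxrank_exprS_stable c; exists k => // j.
move/subnK <-; elim: (j - k)%N => [|t IHt]; first by rewrite add0n !submx_refl.
have eq_kS : (c ^+ k.+1 == c ^+ k)%MS.
  have le_kS : (c ^+ k.+1 <= c ^+ k)%MS by rewrite exprS -mulmxE submxMl.
  by rewrite -(mxrank_leqif_eq le_kS).2 rank_stable.
rewrite addSn exprSr -mulmxE; apply/eqmxP.
by apply: eqmx_trans (eqmxMr _ (eqmxP IHt)) _; rewrite mulmxE -exprSr; apply/eqmxP.
Qed.

Lemma unitmx_expr p (c : 'M[K]_p) k : c ^+ k.+1 \in unitmx -> c \in unitmx.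
Proof. by rewrite exprS -mulmxE unitmx_mul => /andP []. Qed.

Lemma kermx_cap_eq0 p (Q : 'M[K]_p) :
  \rank (Q *m Q) = \rank Q -> (kermx Q :&: Q)%MS = 0.
Proof.
move=> rank_QQ; apply/eqP; rewrite -submx0.
have le_ker : (kermx Q <= kermx (Q *m Q))%MS.
  by apply/sub_kermxP; rewrite mulmxA mulmx_ker mul0mx.
have eq_ker : (kermx (Q *m Q) <= kermx Q)%MS.
  by rewrite -(mxrank_leqif_sup le_ker).2 !mxrank_ker rank_QQ.
have [D capE] := submxP (capmxSr (kermx Q) Q).
have /sub_kermxP capQ0 := capmxSl (kermx Q) Q.
have /sub_kermxP DQ0 : (D <= kermx Q)%MS.
  by apply: submx_trans eq_ker; apply/sub_kermxP; rewrite mulmxA -capE capQ0.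
by rewrite capE DQ0 sub0mx.
Qed.

Lemma kermx_add_full p (Q : 'M[K]_p) :
  (kermx Q :&: Q)%MS = 0 -> (kermx Q + Q == 1%:M)%MS.
Proof.
move=> cap0; rewrite submx1 sub1mx /row_full mxrank_disjoint_sum //=.
by rewrite mxrank_ker subnK ?rank_leq_row.
Qed.

Lemma nilpotent_fixed_row_eq0 n k (X : 'M[K]_n) (w : 'rV[K]_n) :
  X ^+ k = 0 -> w *m X = w -> w = 0.
Proof.
move=> Xk0 wX; suff <- : w *m X ^+ k = w by rewrite Xk0 mulmx0.
by elim: k {Xk0} => [|k IHk]; rewrite ?expr0 ?mulmx1 // exprSr -mulmxE mulmxA IHk wX.
Qed.

Lemma nilpotent_eigenvalue0 n k (X : 'M[K]_n) (f : 'cV[K]_n) mu :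
  (0 < k)%N -> X ^+ k = 0 -> f != 0 -> X *m f = mu *: f -> mu = 0.
Proof.
move=> k_gt0 Xk0 f_nz Xf; have Xkf : X ^+ k *m f = mu ^+ k *: f.
  elim: (k) => [|j IHj]; first by rewrite !expr0 mul1mx scale1r.
  by rewrite exprS -mulmxE -mulmxA IHj -scalemxAr Xf scalerA -exprSr.
move: Xkf; rewrite Xk0 mul0mx => /esym/eqP.
by rewrite scaler_eq0 (negbTE f_nz) orbF expf_eq0 k_gt0 => /eqP.
Qed.

Lemma row_free_rV n (v : 'rV[K]_n) : row_free v = (v != 0).
Proof. by rewrite /row_free rank_rV; case: (v != 0). Qed.

Lemma row_full_cV n (f : 'cV[K]_n) : row_full f = (f != 0).
Proof.
rewrite /row_full -mxrank_tr rank_rV.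
by rewrite (can2_eq (@trmxK _ _ _) (@trmxK _ _ _)) trmx0; case: (f != 0).
Qed.

Lemma outer_sum_eq0_colinear n m (f1 f2 : 'cV[K]_n) (t1 t2 : 'rV[K]_m) :
  f1 *m t1 + f2 *m t2 = 0 -> t2 != 0 -> exists mu, f2 = mu *: f1.
Proof.
rewrite -row_free_rV => E /mulmxVp t2_inv.
have : (f1 *m t1 + f2 *m t2) *m pinvmx t2 = 0 by rewrite E mul0mx.
rewrite mulmxDl -!mulmxA t2_inv mulmx1.
move/eqP; rewrite addrC addr_eq0 => /eqP ->; exists (- (t1 *m pinvmx t2) 0 0).
by rewrite {1}[t1 *m _]mx11_scalar mul_mx_scalar scaleNr.
Qed.

Lemma vbasis_nth_mem (vT : vectType K) (U : {vspace vT}) (k : 'I_(\dim U)) :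
  (vbasis U)`_k \in U.
Proof. exact/vbasis_mem/memt_nth. Qed.

(* Engel-type descent: unless the rank of w0 N drops, w0 lies in w0 N and is
   fixed by an element of N. *)
Lemma common_annihilated_row n (N : {vspace 'M[K]_n}) :
  (forall x y, x \in N -> y \in N -> x *m y \in N) ->
  (forall x (w : 'rV[K]_n), x \in N -> w *m x = w -> w = 0) ->
  forall p (W : 'M[K]_(p, n)), W != 0 -> (forall x, x \in N -> (W *m x <= W)%MS) ->
  exists w : 'rV[K]_n, [/\ (w <= W)%MS, w != 0 & forall x, x \in N -> w *m x = 0].
Proof.
move=> N_mul N_nofix p W.
have [r] := ubnP (\rank W); elim: r p W => // r IHr p W lt_rank W_nz W_stable.
have [w0 w0W w0_nz] := rowV0Pn W_nz.
pose w0N := \matrix_(k < \dim N) (w0 *m (vbasis N)`_k).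
have sub_w0N x : x \in N -> (w0 *m x <= w0N)%MS.
  move=> Nx; rewrite (coord_vbasis Nx) mulmx_sumr.
  apply: summx_sub => k _; rewrite -scalemxAr; apply: scalemx_sub.
  by rewrite -(rowK (fun k => w0 *m (vbasis N)`_k)) row_sub.
have w0NW : (w0N <= W)%MS.
  apply/row_subP => k; rewrite rowK.
  exact: submx_trans (submxMr _ w0W) (W_stable _ (vbasis_nth_mem k)).
have w0N_stable x : x \in N -> (w0N *m x <= w0N)%MS.
  move=> Nx; apply/row_subP => k; rewrite row_mul rowK -mulmxA.
  exact/sub_w0N/N_mul/Nx/vbasis_nth_mem.
have [w0N0|w0N_nz] := eqVneq w0N 0.
  by exists w0; split => // x /sub_w0N; rewrite w0N0 => /submx0null.
have [lt_w0N|ge_w0N] := ltnP (\rank w0N) (\rank W).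
  have [w [w_w0N w_nz w_ann]] :=
    IHr _ w0N (leq_trans lt_w0N (ltnSE lt_rank)) w0N_nz w0N_stable.
  by exists w; split => //; apply: submx_trans w0NW.
have /submxP [D w0E] : (w0 <= w0N)%MS.
  by apply: submx_trans w0W _; rewrite -(mxrank_leqif_sup w0NW).2 eqn_leq ge_w0N mxrankS.
suff /N_nofix : (\sum_k D 0 k *: (vbasis N)`_k) \in N.
  move=> /(_ w0) w0_fix; case/eqP: w0_nz; apply: w0_fix.
  rewrite mulmx_sumr [RHS]w0E mulmx_sum_row; apply: eq_bigr => k _.
  by rewrite rowK scalemxAr.
by apply: memv_suml => k _; rewrite memvZ // vbasis_nth_mem.
Qed.

End MatrixFacts.

Section Fitting.
Variables (K : fieldType) (A : falgType K) (p : nat) (phi : A -> 'M[K]_p).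
Hypothesis phi_indecomposable : indecomposable phi.

Lemma indecomposable_unit_or_nilpotent (c : 'M[K]_p) :
  (forall a, phi a *m c = c *m phi a) -> c \in unitmx \/ c ^+ p = 0.
Proof.
move=> c_endo; have [p_gt0 indec] := phi_indecomposable.
have [k le_kp stable] := eqmx_expr_stable c.
set Q := c ^+ p.
have rank_QQ : \rank (Q *m Q) = \rank Q.
  rewrite mulmxE -exprD (eqmx_rank (stable _ (leq_trans le_kp (leq_addr p p)))).
  by rewrite (eqmx_rank (stable _ le_kp)).
have commX j a : phi a *m c ^+ j = c ^+ j *m phi a.
  elim: j => [|j IHj]; first by rewrite expr0 mulmx1 mul1mx.
  by rewrite exprS -mulmxE !mulmxA c_endo -!mulmxA IHj.
have ker_sub : submodule phi (kermx Q).
  by move=> a; apply/sub_kermxP; rewrite -mulmxA commX mulmxA mulmx_ker mul0mx.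
have img_sub : submodule phi Q by move=> a; rewrite -commX submxMl.
have cap0 := kermx_cap_eq0 rank_QQ.
have cap_eq0 : (kermx Q :&: Q == (0 : 'M_p))%MS by rewrite cap0 !sub0mx.
have [/andP [/submx0null ker0 _]|/andP [/submx0null Q0 _]] :=
  indec _ _ ker_sub img_sub (kermx_add_full cap0) cap_eq0.
- left; apply: (@unitmx_expr _ _ _ p.-1); rewrite prednK //.
  by rewrite -row_free_unit -kermx_eq0 ker0.
- by right.
Qed.

End Fitting.

Section LocalAlgebra.
Variables (K : fieldType) (A : falgType K).

Lemma maximal_left_ideal_exists (L : {vspace A}) :
  left_ideal L -> (1 : A) \notin L -> exists2 I, maximal_left_ideal I & (L <= I)%VS.
Proof.
have [r] := ubnP (\dim {:A} - \dim L).
elim: r L => // r IHr L lt_codim L_ideal L1.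
have [L_max|L_not_max] := pselect (maximal_left_ideal L); first by exists L.
have : ~ (forall L', left_ideal L' -> (L <= L')%VS -> L' = L \/ (1 : A) \in L').
  by move=> L_maximal; apply: L_not_max; split.
move=> /existsNP [L' /not_implyP [L'_ideal /not_implyP [LL' /not_orP [L'_neq L'1]]]].
have [I I_max L'I] : exists2 I, maximal_left_ideal I & (L' <= I)%VS.
  apply: IHr => //; last exact/negP.
  have lt_dim : (\dim L < \dim L')%N.
    rewrite ltn_neqAle (dimv_leqif_eq LL').2 dimvS // andbT.
    by apply/negP => /eqP E; apply: L'_neq.
  apply: leq_trans (ltnSE lt_codim); apply: ltn_sub2l => //.
  exact: leq_trans lt_dim (dimvS (subvf L')).
by exists I => //; apply: subv_trans L'I.
Qed.

Variable I : {vspace A}.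
Hypothesis I_max : maximal_left_ideal I.
Hypothesis I_unique : forall I', maximal_left_ideal I' -> I' = I.

Lemma notin_left_invertible a : a \notin I -> exists b, b * a = 1.
Proof.
move=> aI; pose L := limg (amulr a).
have memL x : x \in L <-> exists b, x = b * a.
  split; first by move=> /memv_imgP [b _ ->]; exists b; rewrite lfunE.
  move=> [b ->]; have -> : b * a = amulr a b by rewrite lfunE.
  by rewrite memv_img ?memvf.
have L_ideal : left_ideal L.
  by move=> c x /memL [b ->]; apply/memL; exists (c * b); rewrite mulrA.
have [/memL [b]|L1] := boolP ((1 : A) \in L); first by exists b.
have [I' I'_max LI'] := maximal_left_ideal_exists L_ideal L1.
rewrite (I_unique I'_max) in LI'; case/negP: aI.
by apply: (subvP LI'); apply/memL; exists 1; rewrite mul1r.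
Qed.

Lemma one_notin_max : (1 : A) \notin I.
Proof. by case: I_max. Qed.

Lemma sub1_notin_max i : i \in I -> 1 - i \notin I.
Proof.
by move=> Ii; apply: contra one_notin_max => one_in; rewrite -(subrK i 1) memvD.
Qed.

Section Representation.
Variables (p : nat) (phi : A -> 'M[K]_p).
Hypothesis phi_module : is_module phi.

Lemma module_linear : linear phi. Proof. by case: phi_module. Qed.
HB.instance Definition _ :=
  GRing.isLinear.Build K A 'M[K]_p *:%R phi module_linear.

Let phi1 : phi 1 = 1%:M. Proof. by case: phi_module. Qed.
Let phiM a b : phi (a * b) = phi b *m phi a. Proof. by case: phi_module. Qed.

Lemma module_unitmx a : a \notin I -> phi a \in unitmx.
Proof.
move=> /notin_left_invertible [b ba1].
by have := phiM b a; rewrite ba1 phi1 => /esym/mulmx1_unit[].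
Qed.

Lemma module_sub1_unitmx i : i \in I -> phi (1 - i) \in unitmx.
Proof. by move=> /sub1_notin_max /module_unitmx. Qed.

Lemma module_fixed_row_eq0 i (w : 'rV[K]_p) : i \in I -> w *m phi i = w -> w = 0.
Proof.
move=> Ii wi; have /mulmxK/(_ w) <- := module_sub1_unitmx Ii.
by rewrite linearB /= phi1 mulmxBr mulmx1 wi subrr mul0mx.
Qed.

Lemma module_fixed_col_eq0 i (f : 'cV[K]_p) : i \in I -> phi i *m f = f -> f = 0.
Proof.
move=> Ii if_; have /mulKmx/(_ f) <- := module_sub1_unitmx Ii.
by rewrite linearB /= phi1 mulmxBl mul1mx if_ subrr mulmx0.
Qed.

(* [s] spans a copy of k in Soc(M); [v |-> v *m f] is a module map M -> k,
   i.e. a functional vanishing on J(M) = I M. *)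
Definition socle_vector (s : 'rV[K]_p) := forall i, i \in I -> s *m phi i = 0.
Definition top_functional (f : 'cV[K]_p) := forall i, i \in I -> phi i *m f = 0.

Lemma module_residue a l : phi a = phi (a - l *: 1) + l%:M.
Proof. by rewrite -scalemx1 -phi1 -linearZ -linearD subrK. Qed.

Lemma socle_vector_act s a l :
  socle_vector s -> a - l *: 1 \in I -> s *m phi a = l *: s.
Proof.
by move=> s_soc al; rewrite (module_residue a l) mulmxDr s_soc // add0r mul_mx_scalar.
Qed.

Lemma top_functional_act f a l :
  top_functional f -> a - l *: 1 \in I -> phi a *m f = l *: f.
Proof.
by move=> f_top al; rewrite (module_residue a l) mulmxDl f_top // add0r mul_scalar_mx.
Qed.

Lemma socle_vector_exists q (W : 'M[K]_(q, p)) :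
  W != 0 -> (forall a, (W *m phi a <= W)%MS) ->
  exists s, [/\ (s <= W)%MS, s != 0 & socle_vector s].
Proof.
move=> W_nz W_sub; pose N := (linfun phi @: I)%VS.
have memN x : x \in N -> exists2 i, i \in I & x = phi i.
  by move=> /memv_imgP [i Ii ->]; exists i; rewrite ?lfunE.
have phiN i : i \in I -> phi i \in N by move=> Ii; rewrite -lfunE memv_img.
have := @common_annihilated_row _ _ N _ _ _ W W_nz; case.
- move=> _ _ /memN [i Ii ->] /memN [j Ij ->].
  by rewrite -phiM phiN //; case: I_max => I_ideal _ _; apply: I_ideal.
- by move=> x w /memN [i Ii ->]; apply: module_fixed_row_eq0.
- by move=> x /memN [i _ ->].
by move=> s [sW s_nz s_ann]; exists s; split => // i Ii; apply/s_ann/phiN.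
Qed.

Lemma top_functional_exists q (U : 'M[K]_(q, p)) :
  (forall a, (U *m phi a <= U)%MS) -> (\rank U < p)%N ->
  exists f, [/\ f != 0, U *m f = 0 & top_functional f].
Proof.
move=> U_sub rankU; pose N := (linfun (trmx \o phi) @: I)%VS.
have memN x : x \in N -> exists2 i, i \in I & x = (phi i)^T.
  by move=> /memv_imgP [i Ii ->]; exists i; rewrite ?lfunE.
have phiN i : i \in I -> (phi i)^T \in N.
  by move=> Ii; rewrite -[_^T]/((trmx \o phi) i) -lfunE memv_img.
have W_nz : kermx U^T != 0.
  by rewrite -mxrank_eq0 mxrank_ker mxrank_tr -lt0n subn_gt0.
have := @common_annihilated_row _ _ N _ _ _ _ W_nz; case.
- move=> _ _ /memN [i Ii ->] /memN [j Ij ->].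
  by rewrite -trmx_mul -phiM phiN //; case: I_max => I_ideal _ _; apply: I_ideal.
- move=> x w /memN [i Ii ->] wi; apply: trmx_inj; rewrite trmx0.
  by apply: (module_fixed_col_eq0 Ii); rewrite -[phi i]trmxK -trmx_mul wi.
- move=> x /memN [i _ ->]; apply/sub_kermxP; have /submxP [D DE] := U_sub i.
  by rewrite -mulmxA -trmx_mul DE trmx_mul mulmxA mulmx_ker mul0mx.
move=> w [wW w_nz w_ann]; exists w^T; split.
- by rewrite -(inj_eq (@trmx_inj _ _ _)) trmxK trmx0.
- by rewrite -[U]trmxK -trmx_mul (sub_kermxP wW) trmx0.
- by move=> i Ii; rewrite -[phi i]trmxK -trmx_mul w_ann ?trmx0 ?phiN.
Qed.

End Representation.
End LocalAlgebra.

Section ClosedLocalAlgebra.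
Variables (K : closedFieldType) (A : falgType K) (I : {vspace A}).
Hypothesis I_max : maximal_left_ideal I.
Hypothesis I_unique : forall I', maximal_left_ideal I' -> I' = I.

(* An eigenvalue l of phi a makes phi (a - l) singular, so a - l cannot avoid I. *)
Lemma residue_scalar p (phi : A -> 'M[K]_p) :
  is_module phi -> (0 < p)%N -> forall a, exists l, a - l *: 1 \in I.
Proof.
case: p phi => // p phi phi_module _ a.
have [l] : exists l, eigenvalue (phi a) l.
  have /closed_rootP [l l_root] : size (char_poly (phi a)) != 1.
    by rewrite size_char_poly.
  by exists l; rewrite eigenvalue_root_char.
move=> /eigenvalueP [v va v_nz]; exists l; apply: contraT.
move=> /(module_unitmx I_unique phi_module) al_unit.
have v_ann : v *m phi (a - l *: 1) = 0.
  apply: (addIr (l *: v)); rewrite add0r -mul_mx_scalar -mulmxDr.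
  by rewrite -(module_residue phi_module) va mul_mx_scalar.
by case/eqP: v_nz; rewrite -(mulmxK al_unit v) v_ann mul0mx.
Qed.

Lemma simple_module_scalar m (sigma : A -> 'M[K]_m) :
  is_module sigma -> simple_module sigma ->
  m = 1%N /\ (forall a l, a - l *: 1 \in I -> sigma a = l%:M).
Proof.
move=> sigma_module [m_gt0 sigma_simple].
have one_nz : (1%:M : 'M[K]_m) != 0 by rewrite -mxrank_eq0 mxrank1 -lt0n.
have [w [_ w_nz w_soc]] :=
  socle_vector_exists I_max I_unique sigma_module one_nz (fun a => submx1 _).
have w_sub : submodule sigma <<w>>%MS.
  move=> a; have [l al] := residue_scalar sigma_module m_gt0 a.
  rewrite (eqmxMr _ (genmxE w)) genmxE (socle_vector_act sigma_module w_soc al).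
  exact: scalemx_sub.
have [/andP [w0 _]|/andP [_ w_full]] := sigma_simple _ w_sub.
  by case/negP: w_nz; rewrite -submx0 -genmxE.
rewrite genmxE in w_full; have [D oneE] := submxP w_full.
have sigmaI i : i \in I -> sigma i = 0.
  by move=> Ii; rewrite -[sigma i]mul1mx oneE -mulmxA w_soc // mulmx0.
split=> [|a l al]; last by rewrite (module_residue sigma_module a l) sigmaI ?add0r.
apply/eqP; rewrite eqn_leq m_gt0 andbT.
by have := mxrankS w_full; rewrite mxrank1 rank_rV w_nz.
Qed.

End ClosedLocalAlgebra.

Section QuasiFrobeniusEndomorphisms.
Variables (K : closedFieldType) (A : falgType K) (I : {vspace A}).
Hypothesis I_max : maximal_left_ideal I.
Hypothesis I_unique : forall I', maximal_left_ideal I' -> I' = I.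
Variables (n : nat) (rho : A -> 'M[K]_n).
Hypothesis rho_module : is_module rho.
Hypothesis rho_indecomposable : indecomposable rho.
Hypothesis End_qF : quasi_Frobenius (EndRing rho).

HB.instance Definition _ :=
  GRing.isLinear.Build K A 'M[K]_n *:%R rho (module_linear rho_module).

Local Notation socle_vector := (socle_vector I rho).
Local Notation top_functional := (top_functional I rho).

Definition is_endo (X : 'M[K]_n) : Prop := forall a, rho a *m X = X *m rho a.

Definition endo_mx (x : EndRing rho) : 'M[K]_n := val (x : EndMx rho).

Lemma endo_mxM x y : endo_mx (x * y) = endo_mx y *m endo_mx x.
Proof. by rewrite /endo_mx /= mulmxE. Qed.

Lemma endo_mxD x y : endo_mx (x + y) = endo_mx x + endo_mx y.
Proof. by []. Qed.

Lemma endo_mx0 : endo_mx 0 = 0.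
Proof. by []. Qed.

Lemma endo_mx_inj : injective endo_mx.
Proof. exact: val_inj. Qed.

Lemma endo_mxP x : is_endo (endo_mx x).
Proof. exact/asboolP/(valP (x : EndMx rho)). Qed.

Definition endo_of X (X_endo : is_endo X) : EndRing rho :=
  (Sub X (asboolT X_endo) : EndMx rho).

Lemma endo_ofK X (X_endo : is_endo X) : endo_mx (endo_of X_endo) = X.
Proof. by rewrite /endo_mx SubK. Qed.

Lemma dim_gt0 : (0 < n)%N.
Proof. by case: rho_indecomposable. Qed.

Let residue := residue_scalar I_unique rho_module dim_gt0.

Lemma top_functional_endo f X : top_functional f -> is_endo X -> top_functional (X *m f).
Proof. by move=> f_top X_endo i Ii; rewrite mulmxA X_endo -mulmxA f_top // mulmx0. Qed.

Lemma socle_vector_endo s X : socle_vector s -> is_endo X -> socle_vector (s *m X).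
Proof. by move=> s_soc X_endo i Ii; rewrite -mulmxA -X_endo mulmxA s_soc // mul0mx. Qed.

(* a acts on f and on s through the same residue scalar. *)
Lemma top_socle_endo f s : top_functional f -> socle_vector s -> is_endo (f *m s).
Proof.
move=> f_top s_soc a; have [l al] := residue a.
rewrite mulmxA (top_functional_act rho_module f_top al) -mulmxA.
by rewrite (socle_vector_act rho_module s_soc al) -scalemxAl scalemxAr.
Qed.

Lemma top_functional_nz : exists2 f, f != 0 & top_functional f.
Proof.
have U_sub a : ((0 : 'M[K]_n) *m rho a <= (0 : 'M_n))%MS by rewrite mul0mx sub0mx.
have [|f [f_nz _ f_top]] := top_functional_exists I_max I_unique rho_module U_sub.
  by rewrite mxrank0 dim_gt0.
by exists f.
Qed.

Lemma socle_vector_nz : exists2 s, s != 0 & socle_vector s.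
Proof.
have one_nz : (1%:M : 'M[K]_n) != 0 by rewrite -mxrank_eq0 mxrank1 -lt0n dim_gt0.
have [s [_ s_nz s_soc]] :=
  socle_vector_exists I_max I_unique rho_module one_nz (fun a => submx1 _).
by exists s.
Qed.

Lemma top_functional_colinear f1 f2 :
  top_functional f1 -> top_functional f2 -> f1 != 0 -> exists mu, f2 = mu *: f1.
Proof.
move=> f1_top f2_top f1_nz; apply: contrapT => not_colinear.
have f2_nz : f2 != 0.
  by apply/eqP => f20; apply: not_colinear; exists 0; rewrite f20 scale0r.
have [s s_nz s_soc] := socle_vector_nz.
pose x1 := endo_of (top_socle_endo f1_top s_soc).
pose x2 := endo_of (top_socle_endo f2_top s_soc).
have relations : forall r1 r2, r1 * x1 + r2 * x2 = 0 -> r1 * x1 + r2 * 0 = 0.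
  move=> r1 r2 /(congr1 endo_mx).
  rewrite endo_mxD !endo_mxM !endo_ofK endo_mx0 -!mulmxA => E.
  have s_r2 : s *m endo_mx r2 = 0.
    by apply/eqP/negPn/negP => /(outer_sum_eq0_colinear E).
  rewrite s_r2 mulmx0 addr0 in E; apply: endo_mx_inj.
  by rewrite endo_mxD !endo_mxM endo_ofK endo_mx0 mul0mx addr0 -mulmxA E.
have [c [c_x1 c_x2]] := injective_regular_extend2 relations End_qF.
have s_free : row_free s by rewrite row_free_rV.
have C_f1 : endo_mx c *m f1 = 1 *: f1.
  apply: (row_free_inj s_free); have := congr1 endo_mx c_x1.
  by rewrite endo_mxM endo_ofK scale1r mulmxA => <-.
have C_f2 : endo_mx c *m f2 = 0.
  apply: (row_free_inj s_free); have := congr1 endo_mx c_x2.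
  by rewrite endo_mxM endo_ofK endo_mx0 mulmxA mul0mx => <-.
have [C_unit|C_nil] := indecomposable_unit_or_nilpotent rho_indecomposable (endo_mxP c).
  by case/eqP: f2_nz; rewrite -(mulKmx C_unit f2) C_f2 mulmx0.
by have := nilpotent_eigenvalue0 dim_gt0 C_nil f1_nz C_f1; apply/eqP; rewrite oner_eq0.
Qed.

Lemma endo_unit_or_annihilates_top f X :
  top_functional f -> f != 0 -> is_endo X -> X \in unitmx \/ X *m f = 0.
Proof.
move=> f_top f_nz X_endo.
have [X_unit|X_nil] := indecomposable_unit_or_nilpotent rho_indecomposable X_endo.
  by left.
have [mu Xf] := top_functional_colinear f_top (top_functional_endo f_top X_endo) f_nz.
by right; rewrite Xf (nilpotent_eigenvalue0 dim_gt0 X_nil f_nz Xf) scale0r.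
Qed.

Definition endo_space : {vspace 'M[K]_n} :=
  (\bigcap_(k < \dim {:A}) lker (linfun (mulmx (rho (vbasis {:A})`_k))
                                  - linfun (mulmxr (rho (vbasis {:A})`_k))))%VS.

Lemma mem_endo_space X : X \in endo_space <-> is_endo X.
Proof.
rewrite memvE; split=> [/subv_bigcapP X_comm a | X_endo].
  rewrite (coord_vbasis (memvf a)) linear_sum mulmx_suml mulmx_sumr /=.
  apply: eq_bigr => k _; rewrite linearZ /= -scalemxAl -scalemxAr; congr (_ *: _).
  move: (X_comm k isT); rewrite -memvE memv_ker add_lfunE opp_lfunE !lfunE /=.
  by rewrite subr_eq0 => /eqP.
apply/subv_bigcapP => k _; rewrite -memvE memv_ker.
by rewrite add_lfunE opp_lfunE !lfunE /= X_endo subrr.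
Qed.

Definition socle_space : 'M[K]_n := (\bigcap_(k < \dim I) kermx (rho (vbasis I)`_k))%MS.

Lemma sub_socle_space s : (s <= socle_space)%MS <-> socle_vector s.
Proof.
split=> [/sub_bigcapmxP s_ker i Ii | s_soc].
  rewrite (coord_vbasis Ii) linear_sum mulmx_sumr big1 // => k _.
  by rewrite linearZ /= -scalemxAr (sub_kermxP (s_ker k isT)) scaler0.
by apply/sub_bigcapmxP => k _; apply/sub_kermxP/s_soc/vbasis_nth_mem.
Qed.

(* The endomorphisms killing a nonzero top functional are exactly the non-units of
   End(M); they are nilpotent, so they have a common zero on the socle. *)
Lemma socle_vector_annihilated f : top_functional f -> f != 0 ->
  exists s, [/\ s != 0, socle_vector s &
                forall X, is_endo X -> X *m f = 0 -> s *m X = 0].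
Proof.
move=> f_top f_nz.
pose N := (endo_space :&: lker (linfun (mulmxr f)))%VS.
have memN X : X \in N <-> is_endo X /\ X *m f = 0.
  rewrite memv_cap memv_ker lfunE /=.
  split=> [/andP [/mem_endo_space X_endo /eqP //]|[/mem_endo_space -> ->]].
  by rewrite eqxx.
have [s0 s0_nz /sub_socle_space s0_soc] := socle_vector_nz.
have W_nz : socle_space != 0.
  by apply: contraNneq s0_nz => W0; move: s0_soc; rewrite W0 => /submx0null ->.
have := @common_annihilated_row _ _ N _ _ _ socle_space W_nz; case.
- move=> X Y /memN [X_endo Xf] /memN [Y_endo Yf]; apply/memN; split.
    by move=> a; rewrite mulmxA X_endo -mulmxA Y_endo mulmxA.
  by rewrite -mulmxA Yf mulmx0.
- move=> X w /memN [X_endo Xf].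
  have [X_unit|X_nil] := indecomposable_unit_or_nilpotent rho_indecomposable X_endo.
    by case/eqP: f_nz; rewrite -(mulKmx X_unit f) Xf mulmx0.
  exact: nilpotent_fixed_row_eq0 X_nil.
- move=> X /memN [X_endo _]; apply/row_subP => i; rewrite row_mul.
  by apply/sub_socle_space/socle_vector_endo => //; apply/sub_socle_space/row_sub.
move=> s [/sub_socle_space s_soc s_nz s_ann].
by exists s; split=> // X X_endo Xf; apply/s_ann/memN.
Qed.

Lemma socle_vector_colinear s1 s2 :
  socle_vector s1 -> socle_vector s2 -> s1 != 0 -> exists mu, s2 = mu *: s1.
Proof.
have [f f_nz f_top] := top_functional_nz.
have f_full : row_full f by rewrite row_full_cV.
have [s [s_nz s_soc s_rad]] := socle_vector_annihilated f_top f_nz.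
suff colinear_s t : socle_vector t -> exists mu, t = mu *: s.
  move=> /colinear_s [mu1 ->] /colinear_s [mu2 ->] s1_nz; exists (mu2 / mu1).
  by rewrite scalerA divfK //; apply: contraNneq s1_nz => ->; rewrite scale0r.
move=> t_soc; have [-> | t_nz] := eqVneq t 0; first by exists 0; rewrite scale0r.
pose y := endo_of (top_socle_endo f_top t_soc).
pose z := endo_of (top_socle_endo f_top s_soc).
have relations : forall r1 r2, r1 * y + r2 * 0 = 0 -> r1 * z + r2 * 0 = 0.
  move=> r1 r2; rewrite !mulr0 !addr0 => /(congr1 endo_mx).
  rewrite endo_mxM endo_ofK endo_mx0 -mulmxA -(mulmx0 _ f) => /(row_full_inj f_full) E.
  apply: endo_mx_inj; rewrite endo_mxM endo_ofK endo_mx0 -mulmxA.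
  have [R_unit|Rf] := endo_unit_or_annihilates_top f_top f_nz (endo_mxP r1).
    by case/eqP: t_nz; rewrite -(mulmxK R_unit t) E mul0mx.
  by rewrite (s_rad _ (endo_mxP r1) Rf) mulmx0.
have [c [c_z _]] := injective_regular_extend2 relations End_qF.
have [mu Cf] :=
  top_functional_colinear f_top (top_functional_endo f_top (endo_mxP c)) f_nz.
have s_mu : s = mu *: t.
  apply: (row_full_inj f_full); have := congr1 endo_mx c_z.
  by rewrite endo_mxM !endo_ofK mulmxA Cf -scalemxAl scalemxAr.
have mu_nz : mu != 0 by apply: contraNneq s_nz => mu0; rewrite s_mu mu0 scale0r.
by exists mu^-1; rewrite s_mu scalerA mulVf ?scale1r.
Qed.

Lemma kermx_top_maximal f :
  top_functional f -> f != 0 -> maximal_submodule rho (kermx f).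
Proof.
move=> f_top f_nz.
have rank_ker : \rank (kermx f) = n.-1.
  by move: f_nz; rewrite -row_full_cV mxrank_ker => /eqP ->; rewrite subn1.
split.
- move=> a; apply/sub_kermxP; have [l al] := residue a.
  rewrite -mulmxA (top_functional_act rho_module f_top al).
  by rewrite -scalemxAr mulmx_ker scaler0.
- by apply: contra f_nz => /sub_kermxP; rewrite mul1mx => ->.
move=> V _ kerV; have [le_rank|gt_rank] := leqP (\rank V) (\rank (kermx f)).
  by left; rewrite kerV -(mxrank_leqif_sup kerV).2 eqn_leq le_rank mxrankS.
right; rewrite sub1mx /row_full eqn_leq rank_leq_row /=.
by rewrite rank_ker -ltnS prednK ?dim_gt0 in gt_rank.
Qed.

Lemma maximal_submodule_kermx_top f U :
  top_functional f -> f != 0 -> maximal_submodule rho U -> (U == kermx f)%MS.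
Proof.
move=> f_top f_nz [U_sub U_proper U_max].
have rankU : (\rank U < n)%N.
  rewrite ltn_neqAle rank_leq_row andbT; apply: contra U_proper => /eqP fullU.
  by rewrite sub1mx /row_full fullU.
have [g [g_nz Ug g_top]] := top_functional_exists I_max I_unique rho_module U_sub rankU.
have [mu gE] := top_functional_colinear f_top g_top f_nz.
have mu_nz : mu != 0 by apply: contraNneq g_nz => mu0; rewrite gE mu0 scale0r.
have Uker : (U <= kermx f)%MS.
  by apply/sub_kermxP; apply: (scalerI mu_nz); rewrite scaler0 scalemxAr -gE.
have [ker_sub ker_proper _] := kermx_top_maximal f_top f_nz.
have [/andP [kerU _]|ker_full] := U_max _ ker_sub Uker; first by rewrite Uker kerU.
by rewrite ker_full in ker_proper.
Qed.

Lemma kermx_top_radical f J :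
  top_functional f -> f != 0 -> is_radical rho J -> (kermx f == J)%MS.
Proof.
move=> f_top f_nz J_rad; apply/andP; split; apply/row_subP => i.
  apply/(J_rad _).2 => U /(maximal_submodule_kermx_top f_top f_nz) /andP [_ kerU].
  exact: submx_trans (row_sub i _) kerU.
exact: (J_rad _).1 (row_sub i J) _ (kermx_top_maximal f_top f_nz).
Qed.

Lemma radical_quotient_iso (sigma : A -> 'M[K]_1) :
  (forall a l, a - l *: 1 \in I -> sigma a = l%:M) ->
  forall J, is_radical rho J -> quotient_iso rho J sigma.
Proof.
move=> sigmaE J J_rad; have [f f_nz f_top] := top_functional_nz.
exists f; split; last exact: kermx_top_radical.
- move=> a; have [l al] := residue a.
  by rewrite (top_functional_act rho_module f_top al) (sigmaE _ _ al) mul_mx_scalar.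
- by rewrite row_full_cV.
Qed.

Lemma socle_vector_sub_submodule s V :
  socle_vector s -> s != 0 -> submodule rho V -> V != 0 -> (s <= V)%MS.
Proof.
move=> s_soc s_nz V_sub V_nz.
have [v [vV v_nz v_soc]] := socle_vector_exists I_max I_unique rho_module V_nz V_sub.
by have [mu ->] := socle_vector_colinear v_soc s_soc v_nz; apply: scalemx_sub.
Qed.

Lemma genmx_socle_simple s :
  socle_vector s -> s != 0 -> simple_submodule rho <<s>>%MS.
Proof.
move=> s_soc s_nz; split.
- move=> a; have [l al] := residue a.
  rewrite (eqmxMr _ (genmxE s)) genmxE (socle_vector_act rho_module s_soc al).
  exact: scalemx_sub.
- by rewrite genmxE submx0 sub0mx andbT.
move=> V V_sub; rewrite genmxE => Vs.
have [->|V_nz] := eqVneq V 0; first by left; rewrite !sub0mx.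
by right; rewrite genmxE Vs socle_vector_sub_submodule.
Qed.

Lemma socle_eqmx s S : socle_vector s -> s != 0 -> is_socle rho S -> (S == s)%MS.
Proof.
move=> s_soc s_nz [S_simple [Us [Us_simple /andP [S_sum _]]]].
have s_simple := genmx_socle_simple s_soc s_nz.
apply/andP; split; last by rewrite -(genmxE s) S_simple.
apply: submx_trans S_sum _.
rewrite big_seq; apply: (big_ind (fun M => (M <= s)%MS)) => [|M1 M2 M1s M2s|U].
- exact: sub0mx.
- by rewrite addsmx_sub M1s.
move=> /Us_simple [U_sub U_nz U_min]; have [s_sub _ _] := s_simple.
have sU : (<<s>> <= U)%MS.
  rewrite genmxE socle_vector_sub_submodule //.
  by apply: contraNneq U_nz => ->; rewrite !sub0mx.
have [/andP [s0 _]|/andP [_ U_s]] := U_min _ s_sub sU; last by rewrite -(genmxE s).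
by case/negP: s_nz; rewrite -submx0 -(genmxE s).
Qed.

Lemma socle_submodule_iso (sigma : A -> 'M[K]_1) :
  (forall a l, a - l *: 1 \in I -> sigma a = l%:M) ->
  forall S, is_socle rho S -> submodule_iso rho S sigma.
Proof.
move=> sigmaE S S_soc; have [s s_nz s_soc] := socle_vector_nz.
have S_s := socle_eqmx s_soc s_nz S_soc.
have s_inv : s *m pinvmx s = 1%:M by rewrite mulmxVp ?row_free_rV.
exists (pinvmx s); split.
- move=> a; have /andP [/submxP [D ->] _] := S_s; have [l al] := residue a.
  rewrite -mulmxA mulmxBr mulmxA (socle_vector_act rho_module s_soc al).
  by rewrite -scalemxAl s_inv mulmxA s_inv (sigmaE _ _ al) mul1mx scalemx1 subrr mulmx0.
- by rewrite (eqmx_rank S_s) rank_rV s_nz.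
- by apply/eqmxP; rewrite -s_inv; apply/eqmxMr/eqmxP.
Qed.

End QuasiFrobeniusEndomorphisms.

Unset Implicit Arguments.
Theorem proposition5p1 (K : closedFieldType) (A : falgType K)
  (n : nat) (rho : A -> 'M[K]_n) :
  local_algebra A ->
  is_module rho ->
  indecomposable rho ->
  quasi_Frobenius (EndRing rho) ->
  forall (m : nat) (sigma : A -> 'M[K]_m),
    is_module sigma -> simple_module sigma ->
    (forall J : 'M[K]_n, is_radical rho J -> quotient_iso rho J sigma) /\
    (forall S : 'M[K]_n, is_socle rho S -> submodule_iso rho S sigma).
Proof.
move=> [I [I_max I_unique]] rho_module rho_indec End_qF.
move=> m sigma sigma_module sigma_simple.
have [m1 sigmaE] := simple_module_scalar I_max I_unique sigma_module sigma_simple.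
subst m; split=> [J|S].
- exact: (radical_quotient_iso I_max I_unique rho_module rho_indec End_qF sigmaE).
- exact: (socle_submodule_iso I_max I_unique rho_module rho_indec End_qF sigmaE).
Qed.
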